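(* The power series $\mathcal{E}_1(x)=\sum_{n=1}^{\infty}e(n)x^n$ is a $2$-regular power series, and it is transcendental over $\mathbb{Q}(x)$.
   Context: The Stern polynomials $B_n(t)\in\mathbb{Z}[t]$ are defined by $B_0(t)=0$, $B_1(t)=1$, and for $n\geq 1$: $B_{2n}(t)=tB_n(t)$, $B_{2n+1}(t)=B_n(t)+B_{n+1}(t)$. For $n\geq1$ let $e(n)=\deg B_n(t)$. A power series $\sum_n a_nx^n$ with coefficients in a field is $k$-regular (in the sense of Allouche–Shallit) if the $\mathbb{Q}$-vector space (over the relevant field) spanned by the subsequences $(a_{k^{j}n+r})_{n\ge0}$, $j\ge0$, $0\le r<k^j$, is finite-dimensional. *)

From HB Require Import structures.
From mathcomp Require Import all_boot all_order all_algebra.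
Set Implicit Arguments. Unset Strict Implicit. Unset Printing Implicit Defensive.
Import Order.TTheory GRing.Theory Num.Theory.
Local Open Scope ring_scope.

Fixpoint stern_fuel (k n : nat) : {poly int} :=
  match k with
  | 0%N => 0
  | k'.+1 =>
      if n == 0%N then 0
      else if n == 1%N then 1
      else if odd n then stern_fuel k' n./2 + stern_fuel k' (n./2).+1
      else 'X * stern_fuel k' n./2
  end.

Definition stern (n : nat) : {poly int} := stern_fuel n.+1 n.

(* e(n) = deg B_n(t) for n >= 1 (size p = deg p + 1). *)
Definition stern_deg (n : nat) : nat := (size (stern n)).-1.

Definition E1 (n : nat) : rat := if n == 0%N then 0 else (stern_deg n)%:R.

(* k-regularity (Allouche–Shallit): the Q-span of the k-kernel
   { (a (k^j n + r))_n : j >= 0, 0 <= r < k^j } is finite-dimensional,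
   i.e. contained in the span of finitely many sequences g_0..g_{m-1}. *)
Definition k_regular (k : nat) (a : nat -> rat) : Prop :=
  exists (m : nat) (g : 'I_m -> nat -> rat),
    forall j r : nat, (r < k ^ j)%N ->
      exists c : 'I_m -> rat,
        forall n : nat, a (k ^ j * n + r)%N = \sum_(i < m) c i * g i n.

(* Formal power series over Q, as coefficient sequences. *)
Definition fps_mul (f g : nat -> rat) : nat -> rat :=
  fun n => \sum_(i < n.+1) f i * g (n - i)%N.
Definition fps_one : nat -> rat := fun n => (n == 0%N)%:R.
Definition fps_pow (f : nat -> rat) (i : nat) : nat -> rat :=
  iter i (fps_mul f) fps_one.
Definition fps_of_poly (p : {poly rat}) : nat -> rat := fun n => p`_n.

(* f is algebraic over Q(x): some nonzero P(x,y) in Q[x][y] (denominators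
   cleared) with P(x, f(x)) = 0. *)
Definition fps_algebraic (f : nat -> rat) : Prop :=
  exists P : {poly {poly rat}}, P != 0 /\
    forall n : nat,
      \sum_(i < size P) fps_mul (fps_of_poly P`_i) (fps_pow f i) n = 0.

Definition fps_transcendental (f : nat -> rat) : Prop := ~ fps_algebraic f.

From mathcomp Require Import all_boot all_order all_algebra.
From mathcomp Require Import zify ring lra.
Set Implicit Arguments. Unset Strict Implicit. Unset Printing Implicit Defensive.
Import Order.TTheory GRing.Theory Num.Theory.
Local Open Scope ring_scope.

(* All leading coefficients of Stern polynomials are positive, so
   the recursion has no cancellation at the top: e(1) = 0, e(2n) = e(n) + 1,
   e(2n+1) = max(e(n), e(n+1)).  Consecutive values differ by at most one,
   which gives e(4n+1) = e(n) + 1, e(4n+3) = e(n+1) + 1, and the logarithmic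
   growth log_4 n - 1 < e(n) <= log_2 n.

   If the span of a finite family is stable under the operators
   n |-> k n + b, it contains the k-kernel of each of its members
   ([k_regular_of_span]); for E1 the family E1(n), E1(n+1), E1(2n+1), 1,
   [n = 0] works, by the recurrences above.

   Suppose P(x, E1) = 0, P = sum_i P_i(x) y^i nonzero.  Take
   M = 4^K, x = 1 - 1/M, N = M^2 and A = sum_(n<N) E1(n) x^n; the growth of e
   gives A = M z with (K-1)/8 <= z <= 4K.  The truncation still satisfies
   P = 0 modulo x^N, so M^(D-1) |P(x, A)| <= M^(D-1) 2^-M poly(K, M), using an
   l1-norm on polynomials.  But M^(D-1) P(1 - 1/M, M z) = sum_i g_i(M) z^i for
   nonzero reversed polynomials g_i, and a dominance lemma keeps this above a
   constant c > 0 once z is large and M >= Z z^d.  Choosing K = 2^m with m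
   large satisfies every condition at once: contradiction. *)

Lemma stern_fuelS k n : stern_fuel k.+1 n =
  if n == 0%N then 0 else if n == 1%N then 1
  else if odd n then stern_fuel k n./2 + stern_fuel k n./2.+1
  else 'X * stern_fuel k n./2.
Proof. by []. Qed.

Lemma stern_fuel_succ k n : (n < k)%N -> stern_fuel k.+1 n = stern_fuel k n.
Proof.
elim: k n => [|k IH] n // lt_nk; rewrite stern_fuelS [RHS]stern_fuelS.
have [//|n_neq0] := eqVneq n 0%N; have [//|n_neq1] := eqVneq n 1%N.
have := odd_double_half n; case: (odd n) => n_eq; rewrite /= in n_eq; rewrite !IH //; lia.
Qed.

Lemma stern_fuelE k n : (n < k)%N -> stern_fuel k n = stern n.
Proof.
elim: k => // k IH; rewrite ltnS leq_eqVlt => /predU1P[-> // | lt_nk].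
by rewrite stern_fuel_succ // IH.
Qed.

Lemma stern1 : stern 1 = 1. Proof. by []. Qed.

Lemma stern_double n : (0 < n)%N -> stern n.*2 = 'X * stern n.
Proof.
move=> n_gt0; have n2_gt1 : (1 < n.*2)%N by rewrite -addnn; lia.
rewrite /stern stern_fuelS odd_double doubleK (gtn_eqF n2_gt1) (gtn_eqF (ltnW n2_gt1)).
by rewrite stern_fuelE //; lia.
Qed.

Lemma stern_double_add1 n : (0 < n)%N -> stern n.*2.+1 = stern n + stern n.+1.
Proof.
move=> n_gt0; have n2_gt0 : (0 < n.*2)%N by rewrite -addnn; lia.
have half_n : (n.*2.+1)./2 = n by rewrite /= uphalf_double.
rewrite /stern stern_fuelS eqSS (gtn_eqF n2_gt0) oddS odd_double half_n.
by rewrite !stern_fuelE // -addnn; lia.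
Qed.

Lemma dyadic_ind (P : nat -> Prop) : P 1%N ->
  (forall m, (0 < m)%N -> P m -> P m.*2) ->
  (forall m, (0 < m)%N -> P m -> P m.+1 -> P m.*2.+1) ->
  forall n, (0 < n)%N -> P n.
Proof.
move=> P1 Pdouble Podd n; elim/ltn_ind: n => n IH n_gt0.
have [-> //|n_neq1] := eqVneq n 1%N.
have := odd_double_half n; rewrite -addnn; case: (odd n) => /= n_eq.
- by rewrite -n_eq addnn; apply: Podd; [lia | apply: IH; lia | apply: IH; lia].
- by rewrite -n_eq addnn; apply: Pdouble; [lia | apply: IH; lia].
Qed.

Lemma lead_coefD_gt0 (R : numDomainType) (p q : {poly R}) :
  0 < lead_coef p -> 0 < lead_coef q ->
  size (p + q) = maxn (size p) (size q) /\ 0 < lead_coef (p + q).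
Proof.
move=> p_gt0 q_gt0.
have [lt_pq|lt_qp|eq_pq] := ltngtP (size p) (size q).
- by rewrite addrC size_polyDl ?lead_coefDl // (maxn_idPr (ltnW lt_pq)).
- by rewrite size_polyDl ?lead_coefDl // (maxn_idPl (ltnW lt_qp)).
have top : (p + q)`_(size p).-1 = lead_coef p + lead_coef q.
  by rewrite coefD !lead_coefE eq_pq.
have top_gt0 : 0 < (p + q)`_(size p).-1 by rewrite top addr_gt0.
have size_pq : size (p + q) = size p.
  apply/eqP; rewrite eqn_leq (leq_trans (size_polyD _ _)) -?eq_pq ?maxnn //=.
  rewrite leqNgt; apply/negP => lt_pq; move: top_gt0.
  by rewrite nth_default ?ltxx // -ltnS (ltn_predK lt_pq).
by rewrite lead_coefE size_pq.
Qed.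

Lemma stern_lead_gt0 n : (0 < n)%N -> 0 < lead_coef (stern n).
Proof.
move: n; apply: dyadic_ind => [|m m_gt0 IH|m m_gt0 IHm IHm1].
- by rewrite stern1 lead_coef1.
- by rewrite stern_double // mulrC lead_coefMX.
- by rewrite stern_double_add1 //; case: (lead_coefD_gt0 IHm IHm1).
Qed.

Lemma stern_neq0 n : (0 < n)%N -> stern n != 0.
Proof. by move=> n_gt0; rewrite -lead_coef_eq0 lt0r_neq0 ?stern_lead_gt0. Qed.

Lemma stern_deg1 : stern_deg 1 = 0%N.
Proof. by rewrite /stern_deg stern1 size_poly1. Qed.

Lemma stern_deg_double n : (0 < n)%N -> stern_deg n.*2 = (stern_deg n).+1.
Proof.
move=> n_gt0; rewrite /stern_deg stern_double // mulrC size_mulX ?stern_neq0 //=.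
by rewrite prednK // size_poly_gt0 stern_neq0.
Qed.

Lemma stern_deg_double_add1 n : (0 < n)%N ->
  stern_deg n.*2.+1 = maxn (stern_deg n) (stern_deg n.+1).
Proof.
move=> n_gt0; rewrite /stern_deg stern_double_add1 //.
have [-> _] := lead_coefD_gt0 (stern_lead_gt0 n_gt0) (stern_lead_gt0 (ltn0Sn n)).
move: (stern_neq0 n_gt0) (stern_neq0 (ltn0Sn n)); rewrite -!size_poly_gt0.
by case: (size (stern n)) => // a; case: (size (stern n.+1)) => // b _ _; rewrite maxnSS.
Qed.

Lemma stern_deg_succ n : (0 < n)%N ->
  (stern_deg n.+1 <= (stern_deg n).+1 /\ stern_deg n <= (stern_deg n.+1).+1)%N.
Proof.
move: n; apply: dyadic_ind => [|m m_gt0 [IH1 IH2]|m m_gt0 [IH1 IH2] _].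
- by rewrite stern_deg1 -[2%N]/(1.*2)%N stern_deg_double // stern_deg1.
- by rewrite stern_deg_double_add1 // stern_deg_double //; lia.
- by rewrite -doubleS stern_deg_double_add1 // stern_deg_double //; lia.
Qed.

(* The 4-adic recurrences that close the 2-kernel of e. *)
Lemma stern_deg_4n1 n : (0 < n)%N -> stern_deg (4 * n + 1) = (stern_deg n).+1.
Proof.
move=> n_gt0; rewrite (_ : 4 * n + 1 = n.*2.*2.+1)%N; last by rewrite -!mul2n; lia.
rewrite stern_deg_double_add1 ?double_gt0 // stern_deg_double //.
by rewrite stern_deg_double_add1 //; have := stern_deg_succ n_gt0; lia.
Qed.

Lemma stern_deg_4n3 n : stern_deg (4 * n + 3) = (stern_deg n.+1).+1.
Proof.
case: n => [|n].
  rewrite -[3%N]/(1.*2.+1)%N stern_deg_double_add1 //.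
  by rewrite -[2%N]/(1.*2)%N stern_deg_double // stern_deg1.
rewrite (_ : 4 * n.+1 + 3 = n.+1.*2.+1.*2.+1)%N; last by rewrite -!mul2n; lia.
rewrite stern_deg_double_add1 // -doubleS stern_deg_double //.
by rewrite stern_deg_double_add1 //; have := stern_deg_succ (ltn0Sn n); lia.
Qed.

Lemma pow2_stern_deg_le n : (0 < n)%N -> (2 ^ stern_deg n <= n)%N.
Proof.
move: n; apply: dyadic_ind => [|m m_gt0 IH|m m_gt0 IHm IHm1].
- by rewrite stern_deg1.
- by rewrite stern_deg_double // expnS -mul2n leq_mul2l.
- rewrite stern_deg_double_add1 // -mul2n.
  by case: (leqP (stern_deg m) (stern_deg m.+1)) => _; lia.
Qed.

Lemma lt_pow4_stern_deg n : (0 < n)%N -> (n < 4 ^ (stern_deg n).+1)%N.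
Proof.
elim/ltn_ind: n => n IH n_gt0.
have deg2 : stern_deg 2 = 1%N.
  by rewrite -[2%N]/(1.*2)%N stern_deg_double // stern_deg1.
have [n_small|n_large] := ltnP n 4.
  case: n n_small n_gt0 {IH} => [|[|[|[|]]]] // _ _.
  - by rewrite stern_deg1.
  - by rewrite deg2.
  - by rewrite -[3%N]/(4 * 0 + 3)%N stern_deg_4n3 stern_deg1.
(* Compare n = 4q + r with a = q (or q + 1): n < 4(a + 1) and e(a) < e(n). *)
have finish a : (0 < a)%N -> (a < n)%N -> (n < 4 * a.+1)%N ->
    (stern_deg a < stern_deg n)%N -> (n < 4 ^ (stern_deg n).+1)%N.
  move=> a_gt0 lt_an lt_n lt_deg; apply: leq_trans lt_n _.
  rewrite expnS leq_mul2l /=; apply: leq_trans (IH a lt_an a_gt0) _.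
  by rewrite leq_exp2l.
set q := (n %/ 4)%N; have q_gt0 : (0 < q)%N by rewrite divn_gt0.
have [r [n_eq lt_r4]] : exists r, n = (4 * q + r)%N /\ (r < 4)%N.
  by exists (n %% 4)%N; rewrite ltn_mod mulnC -divn_eq.
case: r n_eq lt_r4 => [|[|[|[|r]]]] // n_eq _.
- apply: (finish q); try lia.
  rewrite n_eq addn0 (_ : 4 * q = q.*2.*2)%N; last by rewrite -!mul2n mulnA.
  by rewrite !stern_deg_double ?double_gt0.
- by apply: (finish q); try lia; rewrite n_eq stern_deg_4n1.
- apply: (finish q); try lia.
  rewrite n_eq (_ : 4 * q + 2 = q.*2.+1.*2)%N; last by rewrite -!mul2n; lia.
  by rewrite stern_deg_double // stern_deg_double_add1 // ltnS leq_maxl.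
- by apply: (finish q.+1); try lia; rewrite n_eq stern_deg_4n3.
Qed.

Section RegularFromStableSpan.
Variables (k m : nat) (g : 'I_m -> nat -> rat).

Definition in_span (f : nat -> rat) : Prop :=
  exists c : 'I_m -> rat, forall n, f n = \sum_(i < m) c i * g i n.

Hypothesis g_stable :
  forall (i : 'I_m) b, (b < k)%N -> in_span (fun n => g i (k * n + b)%N).

Lemma in_span_kernel_step f b : (b < k)%N -> in_span f ->
  in_span (fun n => f (k * n + b)%N).
Proof.
move=> lt_bk [c f_eq]; have [d d_eq] := fin_all_exists (fun i => g_stable i lt_bk).
exists (fun l => \sum_(i < m) c i * d i l) => n; rewrite f_eq.
under eq_bigr => i _ do rewrite d_eq mulr_sumr.
rewrite exchange_big; apply: eq_bigr => l _; rewrite mulr_suml.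
by apply: eq_bigr => i _; rewrite mulrA.
Qed.

(* Hence every sequence of the span has its whole k-kernel in the span:
   write r = b k^j + r' with r' < k^j and use k^(j+1) n + r = k^j (k n + b) + r'. *)
Lemma in_span_kernel a : in_span a ->
  forall j r, (r < k ^ j)%N -> in_span (fun n => a (k ^ j * n + r)%N).
Proof.
move=> a_span j; elim: j => [|j IH] r lt_r.
  have -> : r = 0%N by move: lt_r; rewrite expn0; case: r.
  by case: a_span => c a_eq; exists c => n; rewrite mul1n addn0.
have k_gt0 : (0 < k)%N by move: lt_r; rewrite expnS; case: k.
have kj_gt0 : (0 < k ^ j)%N by rewrite expn_gt0 k_gt0.
have lt_b : (r %/ k ^ j < k)%N by rewrite ltn_divLR // -expnS.
have [c c_eq] := in_span_kernel_step lt_b (IH _ (ltn_pmod r kj_gt0)).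
exists c => n; rewrite -c_eq {1}(divn_eq r (k ^ j)) expnSr; congr a; ring.
Qed.

Lemma k_regular_of_span a : in_span a -> k_regular k a.
Proof. by move=> a_span; exists m, g; exact: in_span_kernel. Qed.

End RegularFromStableSpan.

Lemma E1_pos n : (0 < n)%N -> E1 n = (stern_deg n)%:R.
Proof. by case: n. Qed.

(* The recurrences of e transported to E1, with a correction at n = 0
   (where E1 vanishes instead of following the recurrence). *)
Lemma E1_double n : E1 (2 * n) = E1 n + 1 - (n == 0%N)%:R.
Proof.
case: n => [|n]; first by rewrite /E1 /=; ring.
by rewrite !E1_pos ?muln_gt0 // mul2n stern_deg_double // -natr1 /=; ring.
Qed.

Lemma E1_4n1 n : E1 (4 * n + 1) = E1 n + 1 - (n == 0%N)%:R.
Proof.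
case: n => [|n]; first by rewrite /E1 /= stern_deg1; ring.
by rewrite !E1_pos ?addn1 // -addn1 stern_deg_4n1 // -natr1 /=; ring.
Qed.

Lemma E1_4n3 n : E1 (4 * n + 3) = E1 n.+1 + 1.
Proof. by rewrite !E1_pos ?addn3 // -addn3 stern_deg_4n3 -natr1. Qed.

(* A five-dimensional space containing the 2-kernel of E1. *)
Definition E1_basis (i : 'I_5) (n : nat) : rat :=
  match val i with
  | 0 => E1 n | 1 => E1 n.+1 | 2 => E1 (2 * n + 1) | 3 => 1
  | _ => (n == 0%N)%:R
  end.

Lemma in_E1_span (f : nat -> rat) (a0 a1 a2 a3 a4 : rat) :
  (forall n, f n = a0 * E1 n + a1 * E1 n.+1 + a2 * E1 (2 * n + 1) + a3
                   + a4 * (n == 0%N)%:R) ->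
  in_span E1_basis f.
Proof.
move=> f_eq; exists (fun i => nth 0 [:: a0; a1; a2; a3; a4] i) => n.
by rewrite f_eq !big_ord_recr big_ord0 /= add0r mulr1.
Qed.
Arguments in_E1_span {f} a0 a1 a2 a3 a4.

Lemma E1_basis_stable (i : 'I_5) b : (b < 2)%N ->
  in_span E1_basis (fun n => E1_basis i (2 * n + b)%N).
Proof.
case: i => [[|[|[|[|[|i]]]]] lt_i] //; case: b => [|[|b]] // _.
- by apply: (in_E1_span 1 0 0 1 (-1)) => n; rewrite /E1_basis /= addn0 E1_double; ring.
- by apply: (in_E1_span 0 0 1 0 0) => n; rewrite /E1_basis /=; ring.
- by apply: (in_E1_span 0 0 1 0 0) => n; rewrite /E1_basis /= addn0 addn1; ring.
- apply: (in_E1_span 0 1 0 1 0) => n; rewrite /E1_basis /=.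
  by rewrite (_ : (2 * n + 1).+1 = 2 * n.+1)%N ?E1_double; [rewrite /=; ring | lia].
- apply: (in_E1_span 1 0 0 1 (-1)) => n; rewrite /E1_basis /=.
  by rewrite (_ : 2 * (2 * n + 0) + 1 = 4 * n + 1)%N ?E1_4n1; [ring | lia].
- apply: (in_E1_span 0 1 0 1 0) => n; rewrite /E1_basis /=.
  by rewrite (_ : 2 * (2 * n + 1) + 1 = 4 * n + 3)%N ?E1_4n3; [ring | lia].
- by apply: (in_E1_span 0 0 0 1 0) => n; rewrite /E1_basis /=; ring.
- by apply: (in_E1_span 0 0 0 1 0) => n; rewrite /E1_basis /=; ring.
- by apply: (in_E1_span 0 0 0 0 1) => n; rewrite /E1_basis /= addn0 muln_eq0; ring.
- by apply: (in_E1_span 0 0 0 0 0) => n; rewrite /E1_basis /= addn1 /=; ring.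
Qed.

Theorem E1_regular : k_regular 2 E1.
Proof.
apply: (k_regular_of_span E1_basis_stable).
by apply: (in_E1_span 1 0 0 0 0) => n; ring.
Qed.

Section L1Norm.
Variable R : realFieldType.
Implicit Types (p q : {poly R}) (c x y z : R).

Definition norm1 p : R := \sum_(i < size p) `|p`_i|.

Lemma norm1_widen p n : (size p <= n)%N -> norm1 p = \sum_(i < n) `|p`_i|.
Proof.
move=> le_pn; rewrite /norm1 (big_ord_widen _ (fun i => `|p`_i|) le_pn) big_mkcond.
apply: eq_bigr => i _; case: ifP => // /negbT; rewrite -leqNgt => le_pi.
by rewrite nth_default // normr0.
Qed.

Lemma norm1_ge0 p : 0 <= norm1 p.
Proof. exact: sumr_ge0. Qed.

Lemma norm1D p q : norm1 (p + q) <= norm1 p + norm1 q.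
Proof.
have le_p := leq_maxl (size p) (size q); have le_q := leq_maxr (size p) (size q).
rewrite !(norm1_widen (leq_trans (size_polyD p q) (leqnn _))) (norm1_widen le_p).
rewrite (norm1_widen le_q) -big_split; apply: ler_sum => i _.
by rewrite coefD ler_normD.
Qed.

Lemma norm1_MXaddC p c : norm1 (p * 'X + c%:P) = norm1 p + `|c|.
Proof.
rewrite (@norm1_widen _ (size p).+1); last by rewrite size_MXaddC; case: ifP.
rewrite big_ord_recl coefD coefMX coefC /= add0r addrC (norm1_widen (leqnn _)).
by congr (_ + _); apply: eq_bigr => i _; rewrite coefD coefMX coefC addr0.
Qed.

Lemma norm1_CM c p : norm1 (c%:P * p) = `|c| * norm1 p.
Proof.
rewrite (@norm1_widen _ (size p)) ?mul_polyC ?size_scale_leq // mulr_sumr.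
by apply: eq_bigr => i _; rewrite coefZ normrM.
Qed.

Lemma norm1M p q : norm1 (p * q) <= norm1 p * norm1 q.
Proof.
elim/poly_ind: p => [|p c IH]; first by rewrite mul0r /norm1 size_poly0 !big_ord0 mul0r.
rewrite mulrDl mulrAC norm1_MXaddC mulrDl; apply: le_trans (norm1D _ _) _.
by rewrite -[_ * 'X]addr0 -polyC0 norm1_MXaddC normr0 addr0 norm1_CM lerD.
Qed.

Lemma norm1X p i : norm1 (p ^+ i) <= norm1 p ^+ i.
Proof.
elim: i => [|i IH]; first by rewrite !expr0 /norm1 size_poly1 big_ord1 coef1 normr1.
rewrite !exprS; apply: le_trans (norm1M _ _) _.
by rewrite ler_wpM2l ?norm1_ge0.
Qed.

Lemma norm1_sum n (F : 'I_n -> {poly R}) :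
  norm1 (\sum_(i < n) F i) <= \sum_(i < n) norm1 (F i).
Proof.
elim/big_rec2: _ => [|i a p _ IH]; first by rewrite /norm1 size_poly0 big_ord0.
by apply: le_trans (norm1D _ _) _; rewrite lerD2l.
Qed.

Lemma horner_tail_le p N x : (forall n, (n < N)%N -> p`_n = 0) ->
  0 <= x -> x <= 1 -> `|p.[x]| <= x ^+ N * norm1 p.
Proof.
move=> p_low x_ge0 x_le1; rewrite horner_coef mulr_sumr.
apply: le_trans (ler_norm_sum _ _ _) (ler_sum _ _) => i _.
have [lt_iN|le_Ni] := ltnP i N; first by rewrite p_low // mul0r normr0 mulr_ge0 ?exprn_ge0.
by rewrite normrM normrX (ger0_norm x_ge0) mulrC ler_wpM2r // ler_wiXn2l.
Qed.

Lemma horner_le_norm1 p y k : 1 <= y -> (size p <= k)%N ->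
  y * `|p.[y]| <= norm1 p * y ^+ k.
Proof.
move=> y_ge1 le_pk; have y_ge0 : 0 <= y by apply: le_trans y_ge1.
rewrite horner_coef /norm1 mulr_suml.
apply: le_trans (ler_wpM2l y_ge0 (ler_norm_sum _ _ _)) _; rewrite mulr_sumr.
apply: ler_sum => i _; rewrite normrM normrX (ger0_norm y_ge0) mulrCA -exprS.
by rewrite ler_wpM2l // ler_weXn2l // (leq_trans _ le_pk).
Qed.

Lemma size_drop_top p k : (size p <= k.+1)%N ->
  (size (p - (p`_k)%:P * 'X^k)%R <= k)%N.
Proof.
move=> le_pk; apply/leq_sizeP => j le_kj; rewrite coefB coefCM coefXn.
case: (ltngtP j k) => [lt_jk|lt_kj|->]; first by rewrite ltnNge le_kj in lt_jk.
  by rewrite mulr0 subr0 nth_default // (leq_trans le_pk).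
by rewrite mulr1 subrr.
Qed.

Lemma dominant_term c (T a b : R) : 0 <= c -> 1 <= T ->
  c * T <= `|a| -> 2 * `|b| <= c * T -> c / 2 <= `|a + b|.
Proof.
move=> c_ge0 T_ge1 le_a le_b; have := ler_normB (a + b) b; rewrite addrK.
have : c <= c * T by rewrite ler_peMr.
lra.
Qed.

Lemma horner_eventually_ge h : h != 0 ->
  exists2 c, 0 < c & exists2 Z, 1 <= Z & forall z, Z <= z -> c <= `|h.[z]|.
Proof.
move=> h_neq0; set k := (size h).-1; set l := h`_k.
have l_gt0 : 0 < `|l| by rewrite normr_gt0 /l /k -lead_coefE lead_coef_eq0.
set r := h - l%:P * 'X^k.
have size_r : (size r <= k)%N by apply: size_drop_top; rewrite /k leqSpred.
have Z_ge1 : 1 <= 1 + 2 * norm1 r / `|l|.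
  by rewrite lerDl divr_ge0 ?mulr_ge0 ?norm1_ge0 ?ltW.
exists (`|l| / 2); first by rewrite divr_gt0.
exists (1 + 2 * norm1 r / `|l|) => // z le_Zz.
have z_ge1 : 1 <= z by apply: le_trans le_Zz.
have z_ge0 : 0 <= z by apply: le_trans z_ge1.
have zk_ge1 : 1 <= z ^+ k by rewrite exprn_ege1.
have h_eq : h.[z] = l * z ^+ k + r.[z].
  by rewrite /r hornerD hornerN hornerM hornerC hornerXn addrC subrK.
rewrite h_eq; apply: dominant_term zk_ge1 _ _; first exact: ltW.
  by rewrite normrM normrX (ger0_norm z_ge0).
have norm_r : 2 * norm1 r <= `|l| * z.
  have : 2 * norm1 r / `|l| <= z by apply: le_trans le_Zz; rewrite lerDr.
  by rewrite ler_pdivrMr // [z * _]mulrC.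
rewrite -(ler_pM2l (lt_le_trans ltr01 z_ge1)).
apply: le_trans (_ : 2 * (norm1 r * z ^+ k) <= _).
  by rewrite mulrCA ler_wpM2l // horner_le_norm1.
by rewrite mulrA mulrCA mulrA ler_wpM2r ?exprn_ge0 ?(le_trans ler01) // mulrC.
Qed.

Lemma horner_family_le (r : nat -> {poly R}) d k M z : 1 <= M -> 1 <= z ->
  (forall i, (i < d)%N -> (size (r i) <= k)%N) ->
  M * `|\sum_(i < d) (r i).[M] * z ^+ i|
    <= (\sum_(i < d) norm1 (r i)) * M ^+ k * z ^+ d.
Proof.
move=> M_ge1 z_ge1 size_r; have M_ge0 := le_trans ler01 M_ge1.
have z_ge0 := le_trans ler01 z_ge1.
apply: le_trans (ler_wpM2l M_ge0 (ler_norm_sum _ _ _)) _.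
rewrite mulr_sumr !mulr_suml; apply: ler_sum => i _.
rewrite normrM normrX (ger0_norm z_ge0) mulrA.
apply: ler_pM; rewrite ?mulr_ge0 ?exprn_ge0 ?norm1_ge0 ?horner_le_norm1 //.
  exact: size_r.
by rewrite ler_weXn2l // ltnW.
Qed.

Lemma family_top_coef (g : nat -> {poly R}) d i0 : (i0 < d)%N -> g i0 != 0 ->
  exists2 k, \poly_(i < d) (g i)`_k != 0
           & forall i, (i < d)%N -> (size (g i) <= k.+1)%N.
Proof.
move=> lt_i0d g_i0_neq0; set S := (\max_(i < d) size (g i))%N.
have le_S i : (i < d)%N -> (size (g i) <= S)%N.
  by move=> lt_id; exact: (@leq_bigmax _ (fun i : 'I_d => size (g i)) (Ordinal lt_id)).
have S_gt0 : (0 < S)%N by apply: leq_trans (le_S _ lt_i0d); rewrite size_poly_gt0.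
exists S.-1 => [|i lt_id]; last by rewrite prednK //; exact: le_S.
have [i1 size_i1] : exists i1 : 'I_d, size (g i1) = S.
  exists [arg max_(i > Ordinal lt_i0d) size (g i)].
  by rewrite /S (bigop.bigmax_eq_arg (Ordinal lt_i0d)).
apply: contraTneq isT => top_eq0; have := congr1 (fun p => p`_i1) top_eq0.
rewrite coef_poly ltn_ord coef0 -size_i1 -lead_coefE => /eqP.
by rewrite lead_coef_eq0 -size_poly_eq0 size_i1 (gtn_eqF S_gt0).
Qed.

(* With k the common degree bound,
   F(M, z) = M^k h(z) + (terms of degree < k in M), where h is nonzero. *)
Lemma dominance (g : nat -> {poly R}) d i0 : (i0 < d)%N -> g i0 != 0 ->
  exists2 c, 0 < c & exists2 Z, 1 <= Z & forall z M, Z <= z -> Z * z ^+ d <= M ->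
    c <= `|\sum_(i < d) (g i).[M] * z ^+ i|.
Proof.
move=> lt_i0d g_i0_neq0.
have [k h_neq0 size_g] := family_top_coef lt_i0d g_i0_neq0.
set h := \poly_(i < d) (g i)`_k in h_neq0.
have [ch ch_gt0 [Zh Zh_ge1 h_ge]] := horner_eventually_ge h_neq0.
set r := fun i => g i - ((g i)`_k)%:P * 'X^k.
have size_r i : (i < d)%N -> (size (r i) <= k)%N.
  by move=> lt_id; apply: size_drop_top; exact: size_g.
set Hr := \sum_(i < d) norm1 (r i).
have Hr_ge0 : 0 <= Hr by apply: sumr_ge0 => i _; exact: norm1_ge0.
have q_ge0 : 0 <= 2 * Hr / ch by apply: divr_ge0; [apply: mulr_ge0 | apply: ltW].
exists (ch / 2); first by apply: divr_gt0.
exists (Zh + 2 * Hr / ch); first lra.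
move=> z M le_z le_M.
have z_ge1 : 1 <= z by lra.
have zd_ge1 : 1 <= z ^+ d by rewrite exprn_ege1.
have M_ge1 : 1 <= M by apply: le_trans le_M; rewrite -[1]mulr1 ler_pM //; lra.
have M_ge0 : 0 <= M by lra.
have F_eq : \sum_(i < d) (g i).[M] * z ^+ i
    = M ^+ k * h.[z] + \sum_(i < d) (r i).[M] * z ^+ i.
  rewrite horner_poly mulr_sumr -big_split /=; apply: eq_bigr => i _.
  by rewrite /r hornerD hornerN hornerM hornerC hornerXn; ring.
rewrite F_eq; apply: (dominant_term (ltW ch_gt0) (exprn_ege1 k M_ge1)).
  rewrite normrM (ger0_norm (exprn_ge0 k M_ge0)) mulrC ler_wpM2l ?exprn_ge0 //.
  by apply: h_ge; lra.
have Hr_z : 2 * Hr * z ^+ d <= ch * M.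
  have le_qM : 2 * Hr / ch * z ^+ d <= M.
    by apply: le_trans le_M; rewrite ler_wpM2r ?exprn_ge0 //; lra.
  have -> : 2 * Hr * z ^+ d = ch * (2 * Hr / ch * z ^+ d).
    by field; rewrite lt0r_neq0.
  by rewrite ler_wpM2l // ltW.
rewrite -(ler_pM2l (lt_le_trans ltr01 M_ge1)).
apply: le_trans (_ : 2 * (Hr * M ^+ k * z ^+ d) <= _).
  by rewrite mulrCA ler_wpM2l // horner_family_le.
have Mk_ge0 : 0 <= M ^+ k by rewrite exprn_ge0.
have := ler_wpM2r Mk_ge0 Hr_z; nra.
Qed.
End L1Norm.

Section Estimates.
Variable R : realFieldType.

Lemma bernoulli (u : R) n : -1 <= u -> 1 + n%:R * u <= (1 + u) ^+ n.
Proof.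
move=> u_ge; elim: n => [|n IH]; first by rewrite expr0 mul0r addr0.
have u1_ge0 : 0 <= 1 + u by lra.
have step := ler_wpM2l u1_ge0 IH.
have sq_ge0 : 0 <= n%:R * (u * u) by rewrite mulr_ge0 // -expr2 sqr_ge0.
rewrite exprS -natr1; nra.
Qed.

(* (1 - 1/M)^M <= 1/2, since (1 - 1/M)^M (1 + 1/M)^M <= 1 and (1 + 1/M)^M >= 2. *)
Lemma one_sub_inv_pow_le_half (M : nat) : (0 < M)%N -> (1 - (M%:R : R)^-1) ^+ M <= 2^-1.
Proof.
move=> M_gt0; set u := (M%:R : R)^-1.
have u_gt0 : 0 < u by rewrite invr_gt0 ltr0n.
have u_le1 : u <= 1 by rewrite invf_le1 ?ltr0n // ler1n.
have Mu : M%:R * u = 1 by rewrite mulfV // pnatr_eq0 -lt0n.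
have two_le : 2 <= (1 + u) ^+ M.
  by apply: le_trans (bernoulli _ _); rewrite ?Mu //; lra.
have prod_le : (1 - u) ^+ M * (1 + u) ^+ M <= 1.
  have uu : u * u <= u by rewrite ler_piMr // ltW.
  by rewrite -exprMn exprn_ile1 //; nra.
have a_ge0 : 0 <= (1 - u) ^+ M by rewrite exprn_ge0 // subr_ge0.
have : (1 - u) ^+ M * 2 <= 1 by apply: le_trans prod_le; rewrite ler_wpM2l.
lra.
Qed.

Lemma geometric_sum_le (x : R) N : 0 <= x -> x < 1 ->
  \sum_(n < N) x ^+ n <= (1 - x)^-1.
Proof.
move=> x_ge0 x_lt1; have gap : 0 < 1 - x by rewrite subr_gt0.
have sum_eq : (1 - x) * \sum_(n < N) x ^+ n = 1 - x ^+ N.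
  by rewrite -opprB mulNr -subrX1 opprB.
by rewrite -[_^-1]mulr1 ler_pdivlMl // sum_eq lerBlDr lerDl exprn_ge0.
Qed.

End Estimates.

Definition trunc_series (f : nat -> rat) (N : nat) : {poly rat} := \poly_(n < N) f n.

Lemma fps_pow_trunc f N i n : (n < N)%N ->
  fps_pow f i n = (trunc_series f N ^+ i)`_n.
Proof.
elim: i n => [|i IH] n lt_nN; first by rewrite expr0 coef1.
rewrite /fps_pow iterS -/(fps_pow f i) exprS /fps_mul coefM.
apply: eq_bigr => k _; rewrite coef_poly IH ?(leq_ltn_trans (leq_subr _ _) lt_nN) //.
by rewrite (leq_ltn_trans _ lt_nN) // -ltnS.
Qed.

Definition fps_annihilates (P : {poly {poly rat}}) (f : nat -> rat) : Prop :=
  forall n, \sum_(i < size P) fps_mul (fps_of_poly P`_i) (fps_pow f i) n = 0.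

Lemma annihilator_trunc P f N : fps_annihilates P f ->
  forall n, (n < N)%N -> (\sum_(i < size P) P`_i * trunc_series f N ^+ i)`_n = 0.
Proof.
move=> P_ann n lt_nN; rewrite coef_sum -[RHS](P_ann n); apply: eq_bigr => i _.
rewrite /fps_mul coefM; apply: eq_bigr => k _.
by rewrite (@fps_pow_trunc f N i (n - k)) // (leq_ltn_trans (leq_subr _ _) lt_nN).
Qed.

Lemma annihilator_trunc_eval_le P f N x W : fps_annihilates P f ->
  0 <= x -> x <= 1 -> norm1 (trunc_series f N) <= W -> 1 <= W ->
  `|(\sum_(i < size P) P`_i * trunc_series f N ^+ i).[x]|
    <= x ^+ N * ((\sum_(i < size P) norm1 P`_i) * W ^+ size P).
Proof.
move=> P_ann x_ge0 x_le1 fN_le W_ge1.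
apply: le_trans (horner_tail_le (annihilator_trunc P_ann) x_ge0 x_le1) _.
rewrite ler_wpM2l ?exprn_ge0 // mulr_suml.
apply: le_trans (norm1_sum _) (ler_sum _ _) => i _.
apply: le_trans (norm1M _ _) _; rewrite ler_wpM2l ?norm1_ge0 //.
apply: le_trans (norm1X _ _) _; apply: le_trans (ler_weXn2l _ (ltnW (ltn_ord i))) => //.
by rewrite lerXn2r ?nnegrE ?norm1_ge0 ?(le_trans ler01).
Qed.

Lemma E1_ge0 n : 0 <= E1 n.
Proof. by rewrite /E1; case: (n == 0%N). Qed.

Lemma E1_le n L : (n < 2 ^ L)%N -> E1 n <= L%:R.
Proof.
case: n => [//|n] lt_nL; rewrite E1_pos // ler_nat -(@leq_exp2l 2) //.
exact: ltnW (leq_ltn_trans (pow2_stern_deg_le (ltn0Sn n)) lt_nL).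
Qed.

Lemma E1_ge n k : (4 ^ k <= n)%N -> k%:R <= E1 n.
Proof.
move=> le_kn; have n_gt0 : (0 < n)%N by apply: leq_trans le_kn; rewrite expn_gt0.
rewrite E1_pos // ler_nat -ltnS -(@ltn_exp2l 4) //.
exact: leq_ltn_trans le_kn (lt_pow4_stern_deg n_gt0).
Qed.

Definition sample_point (M : nat) : rat := 1 - (M%:R)^-1.

Lemma sample_point_ge0 M : 0 <= sample_point M.
Proof. by rewrite subr_ge0; case: M => [|M]; rewrite ?invr0 // invf_le1 ?ler1n. Qed.

Lemma sample_point_le1 M : sample_point M <= 1.
Proof. by rewrite lerBlDr lerDl invr_ge0. Qed.

Lemma pow4_sq K : (4 ^ K * 4 ^ K = 2 ^ (4 * K))%N.
Proof. by rewrite -expnD [in LHS](_ : 4 = 2 ^ 2)%N // -expnM addnn -mul2n mulnA. Qed.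

Lemma E1_le_4K K n : (n < 4 ^ K * 4 ^ K)%N -> E1 n <= (4 * K)%:R.
Proof. by rewrite pow4_sq; exact: E1_le. Qed.

(* The truncation of E1 to N = M^2 terms, evaluated at x_M with M = 4^K.
   Since e(n) ~ log n, this is of order K M (like log(1/(1-x))/(1-x)). *)
Definition E1_sample (K : nat) : rat :=
  (trunc_series E1 (4 ^ K * 4 ^ K)).[sample_point (4 ^ K)].

Lemma E1_sample_le K : E1_sample K <= (4 * K)%:R * (4 ^ K)%:R.
Proof.
rewrite /E1_sample horner_poly; set M := (4 ^ K)%N.
apply: le_trans (_ : _ <= \sum_(n < M * M) (4 * K)%:R * sample_point M ^+ n) _.
  apply: ler_sum => n _; rewrite ler_wpM2r ?exprn_ge0 ?sample_point_ge0 //.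
  exact: E1_le_4K.
rewrite -mulr_sumr ler_wpM2l //; apply: le_trans (geometric_sum_le _ _ _) _.
- exact: sample_point_ge0.
- by rewrite /sample_point gtrBl invr_gt0 ltr0n expn_gt0.
- by rewrite /sample_point opprB addrC subrK invrK.
Qed.

(* Lower bound: the terms with M/4 <= n < M/2 each contribute at least
   (K - 1) / 2, since e(n) >= K - 1 there and x_M^n >= 1 - n/M >= 1/2. *)
Lemma E1_sample_ge K : (0 < K)%N -> (K.-1)%:R * (4 ^ K)%:R / 8 <= E1_sample K.
Proof.
move=> K_gt0; set M := (4 ^ K)%N; set a := (4 ^ K.-1)%N; set x := sample_point M.
have M_eq : M = (4 * a)%N by rewrite /M /a -expnS prednK.
have Mr_gt0 : 0 < (M%:R : rat) by rewrite ltr0n expn_gt0.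
have term_ge0 n : 0 <= E1 n * x ^+ n by rewrite mulr_ge0 ?E1_ge0 ?exprn_ge0 ?sample_point_ge0.
have le_a2a : (a <= a.*2)%N by rewrite -addnn leq_addr.
have le_2aN : (a.*2 <= M * M)%N by rewrite M_eq -addnn; nia.
rewrite /E1_sample horner_poly -(big_mkord xpredT (fun n => E1 n * x ^+ n)).
rewrite (@big_cat_nat _ _ _ a 0 (M * M) xpredT _ (leq0n a) (leq_trans le_a2a le_2aN)) /=.
rewrite (@big_cat_nat _ _ _ a.*2 a (M * M) xpredT _ le_a2a le_2aN) /=.
have head_ge0 : 0 <= \sum_(0 <= n < a) E1 n * x ^+ n by apply: sumr_ge0.
have tail_ge0 : 0 <= \sum_(a.*2 <= n < M * M) E1 n * x ^+ n by apply: sumr_ge0.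
suff mid : (K.-1)%:R * M%:R / 8 <= \sum_(a <= n < a.*2) E1 n * x ^+ n by lra.
apply: le_trans (_ : _ <= \sum_(a <= n < a.*2) ((K.-1)%:R / 2)) _.
  rewrite sumr_const_nat -addnn addnK M_eq natrM -mulr_natr.
  by rewrite le_eqVlt; apply/orP; left; apply/eqP; field.
rewrite big_nat_cond [leRHS]big_nat_cond; apply: ler_sum => n /andP[/andP[le_an lt_n2a] _].
have x_pow : 2^-1 <= x ^+ n.
  have Minv_le1 : (M%:R : rat)^-1 <= 1 by rewrite invf_le1 // ler1n expn_gt0.
  apply: le_trans (bernoulli n (_ : -1 <= - (M%:R : rat)^-1)); last by rewrite lerN2.
  have le_nM : (2 * n)%:R <= (M%:R : rat) by rewrite ler_nat M_eq -addnn in lt_n2a *; lia.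
  have : n%:R / M%:R <= (2^-1 : rat) by rewrite ler_pdivrMr //; rewrite natrM in le_nM; lra.
  rewrite mulrN; lra.
by rewrite ler_pM ?E1_ge ?invr_ge0.
Qed.

Section Reversal.
Variable R : fieldType.
Implicit Types p : {poly R}.

(* The reversal of p as a polynomial of degree < D: X^(D-1) p(1/X). *)
Definition rev_poly (D : nat) p : {poly R} := \poly_(k < D) p`_(D.-1 - k).

Lemma horner_rev_poly D p y : (size p <= D)%N -> y != 0 ->
  (rev_poly D p).[y] = y ^+ D.-1 * p.[y^-1].
Proof.
move=> le_pD y_neq0; rewrite horner_poly (horner_coef_wide _ le_pD) mulr_sumr.
rewrite (reindex_inj rev_ord_inj); apply: eq_bigr => j _ /=.
have lt_jD := ltn_ord j; rewrite (_ : D.-1 - (D - j.+1) = j)%N; last lia.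
rewrite mulrCA exprVn -(subnK (_ : j <= D.-1)%N); last lia.
by rewrite (_ : D - j.+1 = D.-1 - j)%N ?exprD ?mulrK // ?unitfE ?expf_neq0 //; lia.
Qed.

Lemma rev_poly_neq0 D p : p != 0 -> (size p <= D)%N -> rev_poly D p != 0.
Proof.
move=> p_neq0 le_pD; have size_gt0 : (0 < size p)%N by rewrite size_poly_gt0.
apply: contraNneq p_neq0 => rev_eq0.
have := congr1 (fun q : {poly R} => q`_(D.-1 - (size p).-1)) rev_eq0.
rewrite coef_poly coef0 (_ : (D.-1 - (size p).-1 < D)%N); last lia.
rewrite (_ : D.-1 - (D.-1 - (size p).-1) = (size p).-1)%N; last lia.
by rewrite -lead_coefE -lead_coef_eq0 => ->.
Qed.

Lemma comp_one_subX_invol p : (p \Po (1 - 'X)) \Po (1 - 'X) = p.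
Proof.
rewrite -comp_polyA comp_polyB comp_polyC comp_polyX subKr.
exact: comp_polyXr.
Qed.

Lemma size_comp_one_subX p : (size (p \Po (1 - 'X)) <= size p)%N.
Proof.
have [->|p_neq0] := eqVneq p 0; first by rewrite comp_poly0 size_poly0.
apply: leq_trans (size_comp_poly_leq _ _) _.
rewrite addrC size_polyDl ?size_polyN ?size_polyX ?size_poly1 // muln1.
by rewrite prednK // size_poly_gt0.
Qed.
End Reversal.

Definition eventually (Pr : nat -> Prop) : Prop :=
  exists m0, forall m, (m0 <= m)%N -> Pr m.

Lemma eventually_and (Pr Qr : nat -> Prop) :
  eventually Pr -> eventually Qr -> eventually (fun m => Pr m /\ Qr m).
Proof.
move=> [m1 Pr_m] [m2 Qr_m]; exists (maxn m1 m2) => m.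
by rewrite geq_max => /andP[le1 le2]; split; [exact: Pr_m | exact: Qr_m].
Qed.

Lemma pow4E K : (4 ^ K = 2 ^ (2 * K))%N.
Proof. by rewrite expnM. Qed.

Lemma leq_pow2 a : (a <= 2 ^ a)%N.
Proof. exact: ltnW (ltn_expl _ (isT : (1 < 2)%N)). Qed.

Lemma linear_lt_pow2 a b : eventually (fun t => a * t + b < 2 ^ t)%N.
Proof.
have sq_le t : (4 <= t)%N -> (t * t <= 2 ^ t)%N.
  elim: t => [|t IH] // le4t; have [lt4t|gt4t|<-] := ltngtP 4 t.+1; [|lia|by []].
  by have := IH lt4t; rewrite expnS; nia.
by exists (a + b + 5)%N => t le_t; have := sq_le t ltac:(lia); nia.
Qed.

Lemma poly_le_pow4 a b :
  eventually (fun m => b * (4 * 2 ^ m) ^ a <= 4 ^ 2 ^ m)%N.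
Proof.
have [t0 lin] := linear_lt_pow2 a (b + 2 * a); exists t0 => m le_m.
have four_pow : (4 * 2 ^ m = 2 ^ (m + 2))%N by rewrite expnD mulnC.
rewrite four_pow -expnM pow4E.
apply: leq_trans (leq_mul (leq_pow2 b) (leqnn _)) _.
rewrite -expnD leq_exp2l //; have := lin m le_m; nia.
Qed.

Lemma poly_lt_pow2_pow4 a b c : eventually (fun m =>
  (4 ^ 2 ^ m) ^ a * b * (4 * 2 ^ m * (4 ^ 2 ^ m * 4 ^ 2 ^ m)) ^ c < 2 ^ 4 ^ 2 ^ m)%N.
Proof.
have [t0 lin] := linear_lt_pow2 (a + 3 * c) (b + 2 * c); exists t0 => m le_m.
set K := (2 ^ m)%N; have le_mK : (m <= K)%N := leq_pow2 m.
have four_K : (4 * K = 2 ^ (m + 2))%N by rewrite expnD mulnC.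
rewrite four_K !pow4E -!expnD -!expnM.
apply: leq_ltn_trans (leq_mul (leq_mul (leqnn _) (leq_pow2 b)) (leqnn _)) _.
rewrite -!expnD ltn_exp2l //; have := lin (2 * K)%N ltac:(lia); nia.
Qed.

Lemma exists_nat_ge (x : rat) : exists n : nat, x <= n%:R.
Proof. by exists (Num.truncn x).+1; exact: ltW (truncnS_gt x). Qed.

Lemma bounds_clash (R : realFieldType) (c H h a w t : R) :
  0 < c -> 0 <= a -> 0 <= w -> 0 < t -> H <= h * c ->
  c <= a * (t^-1 * (H * w)) -> a * h * w < t -> False.
Proof.
move=> c_gt0 a_ge0 w_ge0 t_gt0 le_H le_c lt_t.
have : a * (t^-1 * (H * w)) <= c * (a * h * w) / t.
  have -> : c * (a * h * w) / t = a * (t^-1 * ((h * c) * w)).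
    by field; rewrite lt0r_neq0.
  apply: ler_wpM2l => //; apply: ler_wpM2l; first by rewrite invr_ge0 ltW.
  exact: ler_wpM2r.
have : c * (a * h * w) / t < c by rewrite ltr_pdivrMr // ltr_pM2l.
lra.
Qed.

Section Transcendence.
Variable P : {poly {poly rat}}.
Hypothesis P_neq0 : P != 0.
Hypothesis P_ann : fps_annihilates P E1.

Let d := size P.
Let D := (\max_(i < d) size (P`_i)%R)%N.
(* g_i(M) = M^(D-1) P_i(1 - 1/M) M^i, a polynomial in M. *)
Let g (i : nat) : {poly rat} := rev_poly D (P`_i \Po (1 - 'X)) * 'X^i.
(* The value of P(x, f_N(x)) at x = x_M, for f = E1, M = 4^K and N = M^2. *)
Let Rval (K : nat) : rat :=
  (\sum_(i < d) P`_i * trunc_series E1 (4 ^ K * 4 ^ K) ^+ i).[sample_point (4 ^ K)].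

Lemma size_P_comp i : (i < d)%N -> (size (P`_i \Po (1 - 'X)) <= D)%N.
Proof.
move=> lt_id; apply: leq_trans (size_comp_one_subX _) _.
exact: (@leq_bigmax _ (fun i : 'I_d => size P`_i) (Ordinal lt_id)).
Qed.

Lemma g_top_neq0 : g d.-1 != 0.
Proof.
have lt_top : (d.-1 < d)%N by rewrite prednK // size_poly_gt0.
have P_top : P`_d.-1 != 0 by rewrite -lead_coefE lead_coef_eq0.
rewrite mulf_neq0 ?expf_neq0 ?polyX_eq0 // rev_poly_neq0 ?size_P_comp //.
by apply: contraNneq P_top => eq0; rewrite -(comp_one_subX_invol P`_d.-1) eq0 comp_poly0.
Qed.

Lemma g_sum_eval (M : nat) z : (0 < M)%N ->
  \sum_(i < d) (g i).[M%:R] * z ^+ i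
    = M%:R ^+ D.-1 * \sum_(i < d) (P`_i).[sample_point M] * (M%:R * z) ^+ i.
Proof.
move=> M_gt0; rewrite mulr_sumr; apply: eq_bigr => i _.
rewrite hornerM hornerXn horner_rev_poly ?size_P_comp ?pnatr_eq0 -?lt0n //.
rewrite horner_comp hornerD hornerN hornerC hornerX exprMn.
by rewrite /sample_point !mulrA.
Qed.

(* Lower bound, from the dominance lemma applied to the g_i at the point
   z = f_N(x_M) / M, which lies between (K - 1)/8 and 4K. *)
Lemma Rval_ge : exists2 c, 0 < c & exists Zn : nat, forall K,
  (8 * Zn < K)%N -> (Zn * (4 * K) ^ d <= 4 ^ K)%N ->
  c <= (4 ^ K)%N%:R ^+ D.-1 * `|Rval K|.
Proof.
have lt_top : (d.-1 < d)%N by rewrite prednK // size_poly_gt0.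
have [c c_gt0 [Z Z_ge1 dom]] := @dominance _ g d d.-1 lt_top g_top_neq0.
have [Zn le_Z] := exists_nat_ge Z.
exists c => //; exists Zn => K lt_K le_pow; have K_gt0 : (0 < K)%N by lia.
set M := (4 ^ K)%N; have Mr_gt0 : 0 < (M%:R : rat) by rewrite ltr0n expn_gt0.
set z := E1_sample K / M%:R.
have Mz : M%:R * z = E1_sample K by rewrite /z mulrC divfK // lt0r_neq0.
have z_ge : (K.-1)%:R / 8 <= z.
  by rewrite /z ler_pdivlMr // mulrAC; exact: E1_sample_ge.
have z_le : z <= (4 * K)%:R by rewrite /z ler_pdivrMr // E1_sample_le.
have z_ge0 : 0 <= z by apply: le_trans z_ge; rewrite divr_ge0.
have Z_le_z : Z <= z.
  apply: le_trans le_Z (le_trans _ z_ge).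
  by rewrite ler_pdivlMr // -natrM ler_nat; lia.
have ZzM : Z * z ^+ d <= M%:R.
  apply: le_trans (_ : Zn%:R * (4 * K)%:R ^+ d <= _); last by rewrite -natrX -natrM ler_nat.
  apply: ler_pM => //; first exact: le_trans ler01 Z_ge1.
    exact: exprn_ge0.
  by apply: lerXn2r; rewrite ?nnegrE.
have := dom z M%:R Z_le_z ZzM.
rewrite g_sum_eval ?expn_gt0 // normrM ger0_norm ?exprn_ge0 ?ler0n // Mz.
suff -> : \sum_(i < d) (P`_i).[sample_point M] * E1_sample K ^+ i = Rval K by [].
rewrite /Rval horner_sum; apply: eq_bigr => i _.
by rewrite hornerM horner_exp.
Qed.

(* Upper bound: P(x, f_N(x)) = O(x^N) with norm1 f_N <= 4 K N, and
   x_M^N = (x_M^M)^M <= 2^-M. *)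
Lemma Rval_le K : (0 < K)%N ->
  `|Rval K| <= (2 ^+ (4 ^ K)%N)^-1
                * ((\sum_(i < d) norm1 P`_i) * (4 * K * (4 ^ K * 4 ^ K))%:R ^+ d).
Proof.
move=> K_gt0; set M := (4 ^ K)%N; set W : rat := (4 * K * (M * M))%:R.
have W_ge1 : 1 <= W by rewrite ler1n !muln_gt0 K_gt0 expn_gt0.
have norm_le : norm1 (trunc_series E1 (M * M)) <= W.
  rewrite (norm1_widen (size_poly _ _)) (_ : W = \sum_(n < M * M) (4 * K)%:R).
    by apply: ler_sum => n _; rewrite coef_poly ltn_ord ger0_norm ?E1_ge0 ?E1_le_4K.
  by rewrite sumr_const card_ord /W natrM mulr_natr.
have := annihilator_trunc_eval_le P_ann (sample_point_ge0 M) (sample_point_le1 M) norm_le W_ge1.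
move/le_trans; apply; apply: ler_wpM2r.
  have H_ge0 : 0 <= \sum_(i < d) norm1 P`_i by apply: sumr_ge0 => i _; exact: norm1_ge0.
  by rewrite mulr_ge0 ?exprn_ge0 // (le_trans ler01 W_ge1).
rewrite exprM -exprVn; apply: lerXn2r; rewrite ?nnegrE ?exprn_ge0 ?sample_point_ge0 //.
by apply: one_sub_inv_pow_le_half; rewrite expn_gt0.
Qed.

(* Both bounds together: c <= M^(D-1) |P(x, f_N(x))| <= M^(D-1) 2^-M (poly in K, M),
   which is impossible for K = 2^m with m large. *)
Lemma annihilator_absurd : False.
Proof.
have [c c_gt0 [Zn lower]] := Rval_ge.
set H := \sum_(i < d) norm1 P`_i.
have [Hn le_Hn] := exists_nat_ge (H / c).
have large_K : eventually (fun m => 8 * Zn < 2 ^ m)%N.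
  by exists (8 * Zn)%N => m le_m; apply: leq_ltn_trans le_m (ltn_expl _ _).
have [m0 ev] := eventually_and
  (eventually_and (poly_le_pow4 d Zn) (poly_lt_pow2_pow4 D.-1 Hn d)) large_K.
have [[le_pow lt_pow] lt_K] := ev m0 (leqnn _).
set K := (2 ^ m0)%N in le_pow lt_pow lt_K; have K_gt0 : (0 < K)%N by rewrite expn_gt0.
apply: (@bounds_clash _ c H Hn%:R ((4 ^ K)%N%:R ^+ D.-1)
          ((4 * K * (4 ^ K * 4 ^ K))%:R ^+ d) (2 ^+ (4 ^ K)%N)) => //.
- by rewrite exprn_ge0.
- by rewrite exprn_ge0.
- by rewrite exprn_gt0.
- by rewrite -ler_pdivrMr.
- by apply: le_trans (lower K lt_K le_pow) _; rewrite ler_wpM2l ?exprn_ge0 ?Rval_le.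
- by rewrite -!natrX -!natrM ltr_nat.
Qed.
End Transcendence.

Theorem E1_transcendental : fps_transcendental E1.
Proof. by move=> [P [P_neq0 P_ann]]; exact: annihilator_absurd P_neq0 P_ann. Qed.

Theorem mainTheorem18 : k_regular 2 E1 /\ fps_transcendental E1.
Proof. by split; [exact: E1_regular | exact: E1_transcendental]. Qed.
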